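(* Let $\bar z$ be a feasible point of the MPCC $$\min f(z)\ \text{ s.t. }\ g(z)\le 0,\ h(z)=0,\ 0\le G(z)\perp H(z)\ge 0,$$ where $f:\mathbb{R}^n\to\mathbb{R}$, $g:\mathbb{R}^n\to\mathbb{R}^{n_g}$, $h:\mathbb{R}^n\to\mathbb{R}^{n_h}$, $G,H:\mathbb{R}^n\to\mathbb{R}^m$ are differentiable. If $\bar z$ is piecewise M-stationary, then $\bar z$ is B-stationary.
   Context: The complementarity constraint $0\le G(z)\perp H(z)\ge 0$ means $G(z)\ge0$, $H(z)\ge 0$, $G_i(z)H_i(z)=0$ for all $i$. At a feasible $\bar z$ define $\alpha(\bar z)=\{i: G_i(\bar z)=0<H_i(\bar z)\}$, $\gamma(\bar z)=\{i: G_i(\bar z)>0=H_i(\bar z)\}$, $\beta(\bar z)=\{i: G_i(\bar z)=0=H_i(\bar z)\}$. Let $\mathcal T(\bar z)$ be the (Bouligand) tangent cone of the MPCC feasible set at $\bar z$. $\bar z$ is B-stationary if $\nabla f(\bar z)^Td\ge 0$ for all $d\in\mathcal T(\bar z)$. Piecewise M-stationarity: let $\mathcal P(\beta(\bar z))$ be the set of all pairs $(\beta_1,\beta_2)$ with $\beta_1\cup\beta_2=\beta(\bar z)$, $\beta_1\cap\beta_2=\emptyset$. $\bar z$ is piecewise M-stationary if for every $(\beta_1,\beta_2)\in\mathcal P(\beta(\bar z))$ there exist multipliers $\bar\lambda=(\bar\lambda^g,\bar\lambda^h,\bar\lambda^G,\bar\lambda^H)$ (possibly depending on the partition) with $$0=\nabla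 f(\bar z)+\sum_{i=1}^{n_g}\bar\lambda^g_i\nabla g_i(\bar z)+\sum_{i=1}^{n_h}\bar\lambda^h_i\nabla h_i(\bar z)-\sum_{i\in\alpha(\bar z)\cup\beta(\bar z)}\bar\lambda^G_i\nabla G_i(\bar z)-\sum_{i\in\gamma(\bar z)\cup\beta(\bar z)}\bar\lambda^H_i\nabla H_i(\bar z),$$ $\bar\lambda^g_i\ge0$ and $\bar\lambda^g_ig_i(\bar z)=0$ for all $i$; $\bar\lambda^H_i\ge 0$ for $i\in\beta_1$; $\bar\lambda^G_i\ge0$ for $i\in\beta_2$; and for every $i\in\beta(\bar z)$ either $\bar\lambda^G_i,\bar\lambda^H_i\ge 0$ or $\bar\lambda^G_i\bar\lambda^H_i=0$. *)

From HB Require Import structures.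
From mathcomp Require Import all_boot all_order all_algebra.
From mathcomp Require Import all_classical all_reals all_analysis.
Set Implicit Arguments. Unset Strict Implicit. Unset Printing Implicit Defensive.
Import Order.TTheory GRing.Theory Num.Theory.
Import numFieldNormedType.Exports.
Local Open Scope classical_set_scope.
Local Open Scope ring_scope.

Section MPCC.
Variable R : realType.
Variable n : nat.

Definition grad (f : 'rV[R]_n -> R) (z : 'rV[R]_n) : 'rV[R]_n :=
  \row_(j < n) ('d f z (delta_mx 0 j : 'rV[R]_n)).

Definition dotv (u v : 'rV[R]_n) : R := \sum_(j < n) u 0 j * v 0 j.

Definition tangent_cone (S : set 'rV[R]_n) (z : 'rV[R]_n) : set 'rV[R]_n :=
  [set d | exists (t : R^nat) (dk : nat -> 'rV[R]_n),
      (forall k, 0 < t k) /\ t @ \oo --> (0 : R) /\ dk @ \oo --> d /\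
      (forall k, S (z + t k *: dk k))].

Variables (ng nh m : nat).
Variables (g : 'I_ng -> 'rV[R]_n -> R) (h : 'I_nh -> 'rV[R]_n -> R)
          (G H : 'I_m -> 'rV[R]_n -> R).

Definition mpcc_feasible : set 'rV[R]_n :=
  [set z | (forall i, g i z <= 0) /\ (forall i, h i z = 0) /\
           (forall i, 0 <= G i z /\ 0 <= H i z /\ G i z * H i z = 0)].

Definition alpha_set (z : 'rV[R]_n) : {set 'I_m} :=
  [set i | (G i z == 0) && (0 < H i z)].
Definition gamma_set (z : 'rV[R]_n) : {set 'I_m} :=
  [set i | (0 < G i z) && (H i z == 0)].
Definition beta_set (z : 'rV[R]_n) : {set 'I_m} :=
  [set i | (G i z == 0) && (H i z == 0)].

Definition B_stationary (f : 'rV[R]_n -> R) (z : 'rV[R]_n) : Prop :=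
  forall d, tangent_cone mpcc_feasible z d -> 0 <= dotv (grad f z) d.

Definition piecewise_M_stationary (f : 'rV[R]_n -> R) (z : 'rV[R]_n) : Prop :=
  forall beta1 beta2 : {set 'I_m},
    beta1 :|: beta2 = beta_set z -> beta1 :&: beta2 = finset.set0 ->
    exists (lg : 'I_ng -> R) (lh : 'I_nh -> R) (lG lH : 'I_m -> R),
      [/\ grad f z
          + \sum_(i < ng) lg i *: grad (g i) z
          + \sum_(i < nh) lh i *: grad (h i) z
          - \sum_(i in alpha_set z :|: beta_set z) lG i *: grad (G i) z
          - \sum_(i in gamma_set z :|: beta_set z) lH i *: grad (H i) z = 0,
        (forall i, 0 <= lg i /\ lg i * g i z = 0),
        (forall i, i \in beta1 -> 0 <= lH i),
        (forall i, i \in beta2 -> 0 <= lG i) &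
        (forall i, i \in beta_set z ->
           (0 <= lG i /\ 0 <= lH i) \/ lG i * lH i = 0)].

End MPCC.

(* A tangent direction d is a limit of directions d_k along which the points
   zbar + t_k d_k are feasible; passing to the limit in the difference quotients
   of the constraints puts d in the MPCC-linearized cone: 'd g_i d <= 0 on active
   inequalities, 'd h_i d = 0, 'd G_i d = 0 on alpha, 'd H_i d = 0 on gamma, and
   on beta both derivatives are nonnegative with vanishing product.  Now choose
   the partition beta1 = {i in beta | 'd G_i d = 0}, beta2 = beta \ beta1: on
   beta1 the multiplier lH_i >= 0 meets 'd H_i d >= 0, and on beta2 the
   multiplier lG_i >= 0 meets 'd G_i d > 0 while 'd H_i d = 0.  Pairing the
   stationarity equation with d, every multiplier term then has the sign
   making 'd f d >= 0. *)

From HB Require Import structures.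
From mathcomp Require Import all_boot all_order all_algebra.
From mathcomp Require Import all_classical all_reals all_analysis.
From mathcomp Require Import lra.
Import Order.TTheory GRing.Theory Num.Theory.
Import numFieldNormedType.Exports.
Set Implicit Arguments.
Unset Strict Implicit.
Unset Printing Implicit Defensive.

Local Open Scope classical_set_scope.
Local Open Scope ring_scope.

Lemma cvg_near_cst_eq (R : realType) (u : R^nat) (l c : R) :
  u @ \oo --> l -> (\forall k \near \oo, u k = c) -> l = c.
Proof. by move=> ul /cvg_near_cst uc; exact: cvg_unique ul uc. Qed.

Section DirectionalSequences.
Variables (R : realType) (V : normedModType R) (z d : V).
Variables (t : R^nat) (dk : nat -> V).
Hypotheses (t_gt0 : forall k, 0 < t k) (t_cvg0 : t @ \oo --> 0)
  (dk_cvg : dk @ \oo --> d).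

Local Notation zk k := (z + t k *: dk k).

Lemma step_cvg0 : (fun k => t k *: dk k) @ \oo --> 0.
Proof. by rewrite -(scale0r d); exact: cvgZ. Qed.

Lemma directional_seq_cvg : (fun k => zk k) @ \oo --> z.
Proof. by rewrite -[X in _ --> X]addr0; apply: cvgD; [exact: cvg_cst|exact: step_cvg0]. Qed.

Lemma diff_remainder_quotient_cvg0 (phi : V -> R) : differentiable phi z ->
  (fun k => (phi (zk k) - phi z - 'd phi z (t k *: dk k)) / t k) @ \oo --> 0.
Proof.
move=> /diff_locally /eqaddoP phi_o.
(* Eventually [|dk k| <= M], so the remainder, o(|t k *: dk k|), is o(t k). *)
pose M := `|d| + 1.
have M_gt0 : 0 < M by rewrite /M ltr_wpDl.
have dk_le : \forall k \near \oo, `|dk k| <= M.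
  move/cvgrPdist_le: dk_cvg => /(_ 1 ltr01); apply: filterS => k dk_near.
  by rewrite -[dk k](subKr d) (le_trans (ler_normB _ _)) // lerD2l.
apply/cvgr0Pnorm_le => eps eps_gt0.
have epsM_gt0 : 0 < eps / M by rewrite divr_gt0.
have rem_le : \forall k \near \oo,
    `|phi (t k *: dk k + z) - (phi z + 'd phi z (t k *: dk k))| <= eps / M * `|t k *: dk k|.
  exact: (step_cvg0 (phi_o _ epsM_gt0)).
near=> k.
have tk_gt0 := t_gt0 k.
rewrite normrM normfV (gtr0_norm tk_gt0) ler_pdivrMr //.
rewrite [z + _]addrC -addrA -opprD.
apply: (@le_trans _ _ (eps / M * `|t k *: dk k|)); first by near: k.
rewrite normrZ (gtr0_norm tk_gt0) mulrAC.
rewrite ler_pdivrMr // -mulrA !ler_pM2l //.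
by near: k.
Unshelve. all: by end_near. Qed.

Lemma diff_quotient_cvg (phi : V -> R) : differentiable phi z ->
  (fun k => (phi (zk k) - phi z) / t k) @ \oo --> 'd phi z d.
Proof.
move=> phi_diff.
have split_quotient k : (phi (zk k) - phi z) / t k =
    'd phi z (dk k) + (phi (zk k) - phi z - 'd phi z (t k *: dk k)) / t k.
  have tk_neq0 : t k != 0 by rewrite gt_eqF.
  by rewrite linearZ /= [in RHS]mulrBl [t k *: 'd phi z _]mulrC mulfK // [RHS]addrC subrK.
rewrite (funext split_quotient) -[X in _ --> X]addr0; apply: cvgD.
  by apply: (cvg_comp _ _ dk_cvg); apply: diff_continuous.
exact: diff_remainder_quotient_cvg0.
Qed.

Section ZeroAtBasePoint.
Variable phi : V -> R.
Hypotheses (phi_diff : differentiable phi z) (phi_z0 : phi z = 0).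

Lemma diff_ge0_of_near_ge0 :
  (\forall k \near \oo, 0 <= phi (zk k)) -> 0 <= 'd phi z d.
Proof.
move=> phi_ge0; apply: (ler_cvg_to (cvg_cst 0) (diff_quotient_cvg phi_diff)).
by apply: filterS phi_ge0 => k ?; rewrite phi_z0 subr0 divr_ge0 // ltW.
Qed.

Lemma diff_le0_of_near_le0 :
  (\forall k \near \oo, phi (zk k) <= 0) -> 'd phi z d <= 0.
Proof.
move=> phi_le0; apply: (ler_cvg_to (diff_quotient_cvg phi_diff) (cvg_cst 0)).
by apply: filterS phi_le0 => k ?; rewrite phi_z0 subr0 pmulr_lle0 ?invr_gt0.
Qed.

Lemma diff_eq0_of_near_eq0 :
  (\forall k \near \oo, phi (zk k) = 0) -> 'd phi z d = 0.
Proof.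
move=> phi_eq0; apply/eqP; rewrite eq_le.
by rewrite diff_le0_of_near_le0 ?diff_ge0_of_near_ge0 //;
  apply: filterS phi_eq0 => k ->.
Qed.

End ZeroAtBasePoint.

Lemma diff_mul_eq0 (phi psi : V -> R) :
  differentiable phi z -> differentiable psi z -> phi z = 0 -> psi z = 0 ->
  (forall k, phi (zk k) * psi (zk k) = 0) -> 'd phi z d * 'd psi z d = 0.
Proof.
move=> phi_diff psi_diff phi_z0 psi_z0 prod_eq0.
apply: cvg_near_cst_eq (cvgM (diff_quotient_cvg phi_diff) (diff_quotient_cvg psi_diff)) _.
by apply: nearW => k /=; rewrite phi_z0 psi_z0 !subr0 mulrACA prod_eq0 mul0r.
Qed.

Lemma diff_eq0_of_complementarity (phi psi : V -> R) :
  differentiable phi z -> differentiable psi z -> phi z = 0 -> 0 < psi z ->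
  (forall k, phi (zk k) * psi (zk k) = 0) -> 'd phi z d = 0.
Proof.
move=> phi_diff psi_diff phi_z0 psi_z_gt0 prod_eq0.
apply: diff_eq0_of_near_eq0 => //.
have psi_cvg := cvg_comp _ _ directional_seq_cvg (differentiable_continuous psi_diff).
apply: filterS (@cvgr_gt R _ _ _ _ _ psi_cvg 0 psi_z_gt0) => k psi_k_gt0.
by move/eqP: (prod_eq0 k); rewrite mulf_eq0 (gt_eqF psi_k_gt0) orbF => /eqP.
Qed.

End DirectionalSequences.

Section InnerProduct.
Variables (R : realType) (n : nat).
Implicit Types (u v d : 'rV[R]_n) (phi : 'rV[R]_n -> R).

Lemma dotv0l d : dotv 0 d = 0.
Proof. by rewrite /dotv big1 // => j _; rewrite mxE mul0r. Qed.

Lemma dotvDl u v d : dotv (u + v) d = dotv u d + dotv v d.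
Proof. by rewrite /dotv -big_split; apply: eq_bigr => j _; rewrite mxE mulrDl. Qed.

Lemma dotvNl u d : dotv (- u) d = - dotv u d.
Proof. by rewrite /dotv -sumrN; apply: eq_bigr => j _; rewrite mxE mulNr. Qed.

Lemma dotvBl u v d : dotv (u - v) d = dotv u d - dotv v d.
Proof. by rewrite dotvDl dotvNl. Qed.

Lemma dotvZl (a : R) u d : dotv (a *: u) d = a * dotv u d.
Proof. by rewrite /dotv mulr_sumr; apply: eq_bigr => j _; rewrite mxE mulrA. Qed.

Lemma dotv_suml (I : finType) (P : pred I) (F : I -> 'rV[R]_n) d :
  dotv (\sum_(i | P i) F i) d = \sum_(i | P i) dotv (F i) d.
Proof. by apply: (big_morph (fun u => dotv u d)) => [u v|]; rewrite ?dotvDl ?dotv0l. Qed.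

Lemma dotv_grad phi z d : dotv (grad phi z) d = 'd phi z d.
Proof.
rewrite /dotv /grad [in RHS](row_sum_delta d) linear_sum.
by apply: eq_bigr => j _; rewrite mxE linearZ mulrC.
Qed.

Lemma dotv_sum_grad (I : finType) (P : pred I) (c : I -> R)
    (phi : I -> 'rV[R]_n -> R) z d :
  dotv (\sum_(i | P i) c i *: grad (phi i) z) d = \sum_(i | P i) c i * 'd (phi i) z d.
Proof. by rewrite dotv_suml; apply: eq_bigr => i _; rewrite dotvZl dotv_grad. Qed.

End InnerProduct.

Section MPCCLinearization.
Variables (R : realType) (n ng nh m : nat).
Variables (g : 'I_ng -> 'rV[R]_n -> R) (h : 'I_nh -> 'rV[R]_n -> R)
  (G H : 'I_m -> 'rV[R]_n -> R) (zbar : 'rV[R]_n).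

Definition mpcc_linearized_cone : set 'rV[R]_n :=
  [set d | [/\ forall i, g i zbar = 0 -> 'd (g i) zbar d <= 0,
    forall i, 'd (h i) zbar d = 0,
    forall i, i \in alpha_set G H zbar -> 'd (G i) zbar d = 0,
    forall i, i \in gamma_set G H zbar -> 'd (H i) zbar d = 0 &
    forall i, i \in beta_set G H zbar ->
      [/\ 0 <= 'd (G i) zbar d, 0 <= 'd (H i) zbar d &
          'd (G i) zbar d * 'd (H i) zbar d = 0]]].

Lemma mpcc_tangent_cone_sub_linearized :
  (forall i, differentiable (g i) zbar) -> (forall i, differentiable (h i) zbar) ->
  (forall i, differentiable (G i) zbar) -> (forall i, differentiable (H i) zbar) ->
  mpcc_feasible g h G H zbar ->
  tangent_cone (mpcc_feasible g h G H) zbar `<=` mpcc_linearized_cone.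
Proof.
move=> g_diff h_diff G_diff H_diff [_ [h_z0 GH_z]] d [t [dk [t_gt0 [t_cvg0 [dk_cvg feas_k]]]]].
have GH_k i k : [/\ 0 <= G i (zbar + t k *: dk k), 0 <= H i (zbar + t k *: dk k) &
    G i (zbar + t k *: dk k) * H i (zbar + t k *: dk k) = 0].
  by have [_ [_ /(_ i) [? []]]] := feas_k k.
have le0 := diff_le0_of_near_le0 t_gt0 t_cvg0 dk_cvg.
have ge0 := diff_ge0_of_near_ge0 t_gt0 t_cvg0 dk_cvg.
have eq0 := diff_eq0_of_near_eq0 t_gt0 t_cvg0 dk_cvg.
have compl_eq0 := diff_eq0_of_complementarity t_gt0 t_cvg0 dk_cvg.
have mul_eq0 := diff_mul_eq0 t_gt0 t_cvg0 dk_cvg.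
split=> i.
- move=> g_z0; apply: le0 g_z0 _ => //.
  by apply: nearW => k; have [] := feas_k k.
- apply: eq0 (h_z0 i) _ => //.
  by apply: nearW => k; have [_ []] := feas_k k.
- rewrite inE => /andP [/eqP G_z0 H_z_gt0].
  by apply: compl_eq0 G_z0 H_z_gt0 _ => // k; case: (GH_k i k).
- rewrite inE => /andP [G_z_gt0 /eqP H_z0].
  by apply: compl_eq0 H_z0 G_z_gt0 _ => // k; case: (GH_k i k) => _ _; rewrite mulrC.
- rewrite inE => /andP [/eqP G_z0 /eqP H_z0]; split.
  + by apply: ge0 G_z0 _ => //; apply: nearW => k; case: (GH_k i k).
  + by apply: ge0 H_z0 _ => //; apply: nearW => k; case: (GH_k i k).
  + by apply: mul_eq0 G_z0 H_z0 _ => // k; case: (GH_k i k).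
Qed.

Lemma piecewise_M_stationary_linearized_ge0 (f : 'rV[R]_n -> R) d :
  piecewise_M_stationary g h G H f zbar -> mpcc_linearized_cone d ->
  0 <= 'd f zbar d.
Proof.
move=> PM [g_lin h_lin alpha_lin gamma_lin beta_lin].
pose S := [set i | 'd (G i) zbar d == 0]%SET.
have [|lg [lh [lG [lH [stat lg_compl lH_ge0 lG_ge0 _]]]]] :=
  PM (beta_set G H zbar :&: S) (beta_set G H zbar :\: S) (finset.setID _ _).
  by rewrite finset.setDE finset.setIACA finset.setICr finset.setI0.
have := congr1 (fun u => dotv u d) stat.
rewrite dotv0l !dotvBl !dotvDl dotv_grad !dotv_sum_grad.
have g_sum : \sum_(i < ng) lg i * 'd (g i) zbar d <= 0.
  rewrite -oppr_ge0 -sumrN; apply: sumr_ge0 => i _; rewrite -mulrN.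
  have [lg_ge0 /eqP] := lg_compl i; rewrite mulf_eq0 => /orP [/eqP -> | /eqP g_z0].
    by rewrite mul0r.
  by rewrite mulr_ge0 // oppr_ge0 g_lin.
have h_sum : \sum_(i < nh) lh i * 'd (h i) zbar d = 0.
  by apply: big1 => i _; rewrite h_lin mulr0.
have G_sum : 0 <= \sum_(i in alpha_set G H zbar :|: beta_set G H zbar)
                    lG i * 'd (G i) zbar d.
  apply: sumr_ge0 => i; rewrite inE => /orP [/alpha_lin -> | i_beta].
    by rewrite mulr0.
  have [dG_ge0 _ _] := beta_lin i i_beta.
  have [dG_eq0 | dG_neq0] := eqVneq ('d (G i) zbar d) 0; first by rewrite dG_eq0 mulr0.
  by rewrite mulr_ge0 // lG_ge0 // finset.in_setD i_beta andbT inE dG_neq0.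
have H_sum : 0 <= \sum_(i in gamma_set G H zbar :|: beta_set G H zbar)
                    lH i * 'd (H i) zbar d.
  apply: sumr_ge0 => i; rewrite inE => /orP [/gamma_lin -> | i_beta].
    by rewrite mulr0.
  have [_ dH_ge0 /eqP] := beta_lin i i_beta; rewrite mulf_eq0.
  case/orP => [dG_eq0 | /eqP ->]; last by rewrite mulr0.
  by rewrite mulr_ge0 // lH_ge0 // finset.in_setI i_beta inE dG_eq0.
lra.
Qed.

End MPCCLinearization.

Theorem theorem2p3 (R : realType) (n ng nh m : nat)
  (f : 'rV[R]_n -> R) (g : 'I_ng -> 'rV[R]_n -> R) (h : 'I_nh -> 'rV[R]_n -> R)
  (G H : 'I_m -> 'rV[R]_n -> R) (zbar : 'rV[R]_n) :
  (forall z, differentiable f z) ->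
  (forall i z, differentiable (g i) z) ->
  (forall i z, differentiable (h i) z) ->
  (forall i z, differentiable (G i) z) ->
  (forall i z, differentiable (H i) z) ->
  mpcc_feasible g h G H zbar ->
  piecewise_M_stationary g h G H f zbar ->
  B_stationary g h G H f zbar.
Proof.
(* Both stationarity notions use the same 'd f zbar. *)
move=> _ g_diff h_diff G_diff H_diff feas PM d d_tangent.
rewrite dotv_grad; apply: piecewise_M_stationary_linearized_ge0 PM _.
exact: mpcc_tangent_cone_sub_linearized d_tangent.
Qed.
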